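(* Let $\theta>0$, $n\ge2$, $j\in\{2,\ldots,n\}$. Then for $0\le r\le\lfloor n/j\rfloor$, $$\mathbb{P}(\tilde C_j(n)=r)=\Big(\frac{\theta}{j}\Big)^r\frac{1}{r!}\,\frac{n!}{\lambda_n(\theta)\,\theta_{(n)}}\sum_{i=r}^{\lfloor n/j\rfloor}\frac{(-1)^{i-r}}{(i-r)!}\,\frac{\lambda_{n-ji}(\theta)\,\theta_{(n-ji)}}{(n-ji)!}\Big(\frac{\theta}{j}\Big)^{i-r}.$$
   Context: Fix $\theta>0$. Write $\theta_{(0)}=1$ and $\theta_{(m)}=\theta(\theta+1)\cdots(\theta+m-1)$ for $m\ge1$. $\mathrm{ESF}(\theta)$ is the law of $(C_1(n),\ldots,C_n(n))$ with $\mathbb{P}(C_j(n)=c_j,\,1\le j\le n)=\frac{n!}{\theta_{(n)}}\prod_{j=1}^n(\theta/j)^{c_j}/c_j!$ whenever $\sum_j jc_j=n$. For $n\ge1$, $\lambda_n(\theta)=\mathbb{P}(C_1(n)=0)=\frac{n!}{\theta_{(n)}}\sum_{j=0}^n(-1)^j\frac{\theta^j}{j!}\frac{\theta_{(n-j)}}{(n-j)!}$, and $\lambda_0(\theta)=1$. The derangement cycle counts $(\tilde C_2(n),\ldots,\tilde C_n(n))$ have the law of $(C_2(n),\ldots,C_n(n))$ conditioned on $C_1(n)=0$. *)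

From mathcomp Require Import all_boot all_order all_algebra.
Set Implicit Arguments. Unset Strict Implicit. Unset Printing Implicit Defensive.
Import Order.TTheory GRing.Theory Num.Theory.
Local Open Scope ring_scope.

Definition rising {R : realFieldType} (theta : R) (m : nat) : R :=
  \prod_(i < m) (theta + i%:R).

(* A cycle-count vector for size n: c : {ffun 'I_n.+1 -> 'I_n.+1};
   c j (for 1 <= j <= n) is C_j(n).  The slot 0 is unused and forced to 0
   by the weight below.  Since sum_j j c_j = n, all c_j <= n, so every
   admissible vector is represented exactly once. *)
Definition cycvec (n : nat) := {ffun 'I_n.+1 -> 'I_n.+1}.

Definition esf_weight {R : realFieldType} (theta : R) (n : nat) (c : cycvec n) : R :=
  if (c ord0 == ord0) && ((\sum_(i < n.+1) (i * c i)%N)%N == n)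
  then (n`!)%:R / rising theta n *
       \prod_(i < n.+1 | (0 < i)%N) ((theta / i%:R) ^+ (c i) / ((c i)`!)%:R)
  else 0.

Definition esf_prob {R : realFieldType} (theta : R) (n : nat) (A : pred (cycvec n)) : R :=
  \sum_(c : cycvec n | A c) esf_weight theta c.

(* C_j(n) as a random variable (j interpreted in 1..n). *)
Definition Ccount (n : nat) (c : cycvec n) (j : nat) : nat := c (inord j).

(* P(Ctilde_j(n) = r) := P(C_j(n) = r | C_1(n) = 0). *)
Definition derangement_prob {R : realFieldType} (theta : R) (n j r : nat) : R :=
  esf_prob theta (fun c : cycvec n => (Ccount c j == r) && (Ccount c 1 == 0%N))
  / esf_prob theta (fun c : cycvec n => Ccount c 1 == 0%N).

Definition lambda {R : realFieldType} (theta : R) (n : nat) : R :=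
  if n is 0 then 1 else
  (n`!)%:R / rising theta n *
  \sum_(j < n.+1) ((-1) ^+ j * theta ^+ j / (j`!)%:R
                   * rising theta (n - j) / ((n - j)`!)%:R).

From mathcomp Require Import all_boot all_order all_algebra.
From mathcomp Require Import zify ring.
Import Order.TTheory GRing.Theory Num.Theory.
Set Implicit Arguments.
Unset Strict Implicit.
Local Open Scope ring_scope.

(* Both probabilities in the definition of P(Ctilde_j(n) = r) are, up to the
   common factor n!/theta_(n), values of the unnormalised mass
     mass m P = sum of prod_{i>=1} (theta/i)^{c_i}/c_i!  over the cycle vectors
                c of total size sum_i i c_i = m satisfying P.
   Three facts about these masses give the theorem:
   - fixing one slot: forcing c_i = r multiplies by (theta/i)^r/r! and lowers
     the size by i r (mass_fix_slot); summing over r gives mass_decomp;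
   - inclusion-exclusion: since sum_a (-1)^a w_a w_{s-a} = [s = 0], the
     decomposition can be inverted, expressing the mass with c_i = 0 as an
     alternating sum of unconstrained masses (mass_exclude_slot);
   - the total mass of size m is theta_(m)/m!, proved from the recursion
     m T_m = theta sum_{k<m} T_k obtained by weighting by sum_i i c_i = m.
   With i = 1 this gives mass m (c_1 = 0) = lambda_m theta_(m)/m!; with i = j
   on top of c_1 = 0 it gives the numerator, and the theorem is their quotient. *)

Lemma sum_nat_truncate (R : nmodType) (g : nat -> R) a b : (a <= b)%N ->
  (forall k, (a <= k)%N -> (k < b)%N -> g k = 0) ->
  \sum_(0 <= k < b) g k = \sum_(0 <= k < a) g k.
Proof.
move=> le_ab g0; rewrite (@big_cat_nat _ _ _ a) //=.
rewrite [X in _ + X]big_nat_cond [X in _ + X]big1 ?addr0 // => k.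
by case/andP=> /andP [le_ak lt_kb] _; apply: g0.
Qed.

Lemma sum_nat_shift (R : nmodType) (G : nat -> R) r b :
  \sum_(r <= k < b) G k = \sum_(0 <= k < b - r) G (k + r)%N.
Proof. by rewrite -{1}(add0n r) big_addn. Qed.

Lemma sum_triangle (R : nmodType) (F : nat -> nat -> R) M :
  \sum_(0 <= k < M.+1) \sum_(0 <= r < (M - k).+1) F k r =
  \sum_(0 <= s < M.+1) \sum_(0 <= k < s.+1) F k (s - k)%N.
Proof.
elim: M => [|M IH]; first by rewrite !big_nat1.
rewrite big_nat_recr //= [RHS]big_nat_recr //= subnn big_nat1.
rewrite [X in _ = _ + X]big_nat_recr //= subnn -IH addrA; congr (_ + _).
rewrite -big_split /=; apply: eq_big_nat => k /andP [_ lt_kM].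
by rewrite subSn // big_nat_recr //= -subSn.
Qed.

Lemma natr_fact_neq0 (R : numDomainType) k : (k`!)%:R != 0 :> R.
Proof. by rewrite pnatr_eq0 -lt0n fact_gt0. Qed.

Lemma rising_gt0 (R : realFieldType) (theta : R) m : 0 < theta -> 0 < rising theta m.
Proof.
move=> theta_gt0; apply: prodr_gt0 => i _.
by apply: (lt_le_trans theta_gt0); rewrite lerDl ler0n.
Qed.

(* u_m = theta_(m)/m! satisfies m u_m = theta sum_{k<m} u_k, the recursion
   characterising the total masses below. *)
Lemma rising_recursion (R : realFieldType) (theta : R) m :
  m%:R * (rising theta m / (m`!)%:R) =
  theta * \sum_(0 <= k < m) (rising theta k / (k`!)%:R).
Proof.
elim: m => [|m IH]; first by rewrite big_geq // mul0r mulr0.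
rewrite big_nat_recr //= mulrDr -IH /rising big_ord_recr /= factS natrM.
have fact_neq0 := natr_fact_neq0 R m.
have succ_neq0 : (m.+1)%:R != 0 :> R by rewrite pnatr_eq0.
rewrite -natr1 in succ_neq0 *.
by field; rewrite fact_neq0 succ_neq0.
Qed.

Section SlotWeights.
Variables (R : realFieldType) (theta : R).

(* Weight (theta/k)^x/x! contributed by x cycles of length k. *)
Definition slot_weight (k x : nat) : R := (theta / k%:R) ^+ x / (x`!)%:R.

Lemma slot_weight0 k : slot_weight k 0 = 1.
Proof. by rewrite /slot_weight expr0 fact0 divr1. Qed.

Lemma slot_weightS k r : (0 < k)%N ->
  r.+1%:R * slot_weight k r.+1 = theta / k%:R * slot_weight k r.
Proof.
move=> k_gt0; rewrite /slot_weight factS natrM exprS.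
have fact_neq0 := natr_fact_neq0 R r.
have succ_neq0 : r.+1%:R != 0 :> R by rewrite pnatr_eq0.
have k_neq0 : k%:R != 0 :> R by rewrite pnatr_eq0 -lt0n.
rewrite -natr1 in succ_neq0 *.
by field; rewrite fact_neq0 succ_neq0 k_neq0.
Qed.

(* sum_a (-1)^a w_a w_{s-a} = [s = 0]: the signed weights invert the weights
   under convolution, by the binomial theorem applied to (1 - 1)^s. *)
Lemma slot_weight_inverse k s :
  \sum_(0 <= a < s.+1) (-1) ^+ a * slot_weight k a * slot_weight k (s - a) =
  (s == 0)%:R.
Proof.
set t := theta / k%:R.
have termE a : (a < s.+1)%N -> (-1) ^+ a * slot_weight k a * slot_weight k (s - a) =
    t ^+ s / (s`!)%:R * ((-1) ^+ a *+ 'C(s, a)).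
  rewrite ltnS => le_as.
  have factE : (s`!)%:R = 'C(s, a)%:R * (a`!)%:R * ((s - a)`!)%:R :> R.
    by rewrite -(bin_fact le_as) !natrM mulrA.
  have binom_neq0 : 'C(s, a)%:R != 0 :> R by rewrite pnatr_eq0 -lt0n bin_gt0.
  have powE : t ^+ s = t ^+ a * t ^+ (s - a) by rewrite -exprD subnKC.
  rewrite /slot_weight -/t -mulr_natr factE powE.
  by field; rewrite !natr_fact_neq0 binom_neq0.
rewrite (eq_big_nat _ _ (F2 := fun a => t ^+ s / (s`!)%:R * ((-1) ^+ a *+ 'C(s, a))));
  last by move=> a /andP [_ lt_as]; apply: termE.
rewrite -mulr_sumr big_mkord.
rewrite (eq_bigr (fun i : 'I_s.+1 => 1 ^+ (s - i) * (-1) ^+ i *+ 'C(s, i))); last first.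
  by move=> i _; rewrite expr1n mul1r.
rewrite -exprDn addrN expr0n; clear termE; case: s => [|s] /=; last by rewrite mulr0.
by rewrite expr0 fact0 divr1 mulr1.
Qed.

End SlotWeights.

Section Masses.
Variables (R : realFieldType) (theta : R) (n : nat).
Implicit Types (c : cycvec n) (P : pred (cycvec n)).

Definition cyc_weight c : R := \prod_(i < n.+1 | (0 < i)%N) slot_weight theta i (c i).

Definition cyc_size c : nat := \sum_(i < n.+1) i * c i.

Definition mass (m : nat) P : R :=
  \sum_(c : cycvec n | (c ord0 == ord0) && (cyc_size c == m) && P c) cyc_weight c.

Definition set_slot c (i v : 'I_n.+1) : cycvec n :=
  [ffun k => if k == i then v else c k].

Lemma mass_ext m P Q : P =1 Q -> mass m P = mass m Q.
Proof. by move=> eqPQ; apply: eq_bigl => c; rewrite eqPQ. Qed.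

Lemma cyc_size_slot c (i : 'I_n.+1) : (i * c i <= cyc_size c)%N.
Proof. by rewrite /cyc_size (bigD1 i) //= leq_addr. Qed.

Lemma cyc_size_set_slot c i v :
  (cyc_size (set_slot c i v) + i * c i = cyc_size c + i * v)%N.
Proof.
rewrite /cyc_size (bigD1 i) //= (bigD1 i (F := fun k : 'I_n.+1 => (k * c k)%N)) //=.
rewrite ffunE eqxx (eq_bigr (fun k : 'I_n.+1 => (k * c k)%N)); first by lia.
by move=> k /negbTE k_neq_i; rewrite ffunE k_neq_i.
Qed.

Lemma cyc_weight_set_slot c (i v : 'I_n.+1) : (0 < i)%N ->
  cyc_weight (set_slot c i v) * slot_weight theta i (c i) =
  cyc_weight c * slot_weight theta i v.
Proof.
move=> i_gt0; rewrite /cyc_weight (bigD1 i) //=.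
rewrite (bigD1 i (F := fun k : 'I_n.+1 => slot_weight theta k (c k))) //= ffunE eqxx.
rewrite (eq_bigr (fun k : 'I_n.+1 => slot_weight theta k (c k))); first by ring.
by move=> k /andP [_ /negbTE k_neq_i]; rewrite ffunE k_neq_i.
Qed.

Lemma set_slotK c i v w : set_slot (set_slot c i v) i w = set_slot c i w.
Proof. by apply/ffunP => k; rewrite !ffunE; case: (k == i). Qed.

Lemma set_slot_eq c i w : (set_slot c i w == c) = (c i == w).
Proof.
apply/eqP/eqP => [<-|ciw]; first by rewrite ffunE eqxx.
by apply/ffunP => k; rewrite !ffunE; case: eqP => // ->.
Qed.

Definition slot_free P (i : 'I_n.+1) : Prop := forall c v, P (set_slot c i v) = P c.

End Masses.

Section SlotDecomposition.
Variables (R : realFieldType) (theta : R) (n : nat).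
Implicit Types (P : pred (cycvec n)) (i : 'I_n.+1).

(* Forcing c_i = r: the map c |-> c[i := 0] is a bijection from vectors of
   size m with c_i = r onto vectors of size m - i r with c_i = 0, and it
   divides the weight by (theta/i)^r/r!. *)
Lemma mass_fix_slot m P i r :
  (0 < i)%N -> slot_free P i -> (m <= n)%N -> (i * r <= m)%N ->
  mass theta m (fun c => P c && (c i == r :> nat)) =
  slot_weight theta i r * mass theta (m - i * r) (fun c => P c && (c i == 0%N :> nat)).
Proof.
move=> i_gt0 freeP le_mn le_irm.
have valr : (inord r : 'I_n.+1) = r :> nat.
  by rewrite inordK // ltnS; apply: leq_trans le_mn; apply: leq_trans le_irm; apply: leq_pmull.
rewrite /mass mulr_sumr.
rewrite (reindex_onto (fun c => set_slot c i (inord r)) (fun c => set_slot c i ord0)); last first.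
  move=> c /andP [_ /andP [_ /eqP cir]].
  by rewrite set_slotK; apply/eqP; rewrite set_slot_eq; apply/eqP/val_inj; rewrite /= valr.
apply: eq_big => [c|c].
  have slot0 : set_slot c i (inord r) ord0 = c ord0.
    by rewrite ffunE; case: eqP => // ord0_i; move: i_gt0; rewrite -ord0_i.
  have sizeE := cyc_size_set_slot c i (inord r).
  rewrite set_slotK set_slot_eq freeP slot0 ffunE eqxx valr.
  have [ci0|ci_neq0] := eqVneq (c i) ord0; last first.
    have -> : (c i == 0%N :> nat) = false.
      by apply/negbTE; apply: contra ci_neq0 => /eqP ci0; apply/eqP/val_inj.
    by rewrite !andbF.
  rewrite ci0 eqxx !andbT /= muln0 addn0 valr in sizeE *.
  by rewrite sizeE; congr (_ && _ && _); apply/eqP/eqP; lia.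
move=> /andP [_]; rewrite set_slotK set_slot_eq => /eqP ci0.
have := cyc_weight_set_slot theta c (inord r) i_gt0.
by rewrite ci0 slot_weight0 mulr1 valr mulrC.
Qed.

(* Splitting a weighted sum according to the value r of slot i; since
   i r <= m, only r <= m/i occurs. *)
Lemma mass_by_slot m P i (h : nat -> R) : (0 < i)%N -> (m <= n)%N ->
  \sum_(c : cycvec n | (c ord0 == ord0) && (cyc_size c == m) && P c)
     h (c i) * cyc_weight theta c =
  \sum_(0 <= r < (m %/ i).+1) h r * mass theta m (fun c => P c && (c i == r :> nat)).
Proof.
move=> i_gt0 le_mn.
rewrite (partition_big (fun c : cycvec n => c i) predT) //=.
rewrite (eq_bigr (fun r : 'I_n.+1 =>
    h r * mass theta m (fun c => P c && (c i == r :> nat)))); last first.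
  move=> r _; rewrite /mass mulr_sumr; apply: eq_big => [c|c]; first by rewrite !andbA.
  by move=> /andP [_ /eqP ->].
rewrite -(big_mkord xpredT (fun r => h r * mass theta m (fun c => P c && (c i == r :> nat)))).
apply: sum_nat_truncate => [|r lt_mi_r _]; first by rewrite ltnS (leq_trans (leq_div _ _)).
rewrite /mass big1 ?mulr0 // => c /andP [/andP [_ /eqP sizem] /andP [_ /eqP cir]].
have := cyc_size_slot c i; rewrite sizem cir => le_irm.
by move: lt_mi_r; rewrite ltnNge leq_divRL // mulnC le_irm.
Qed.

(* Summing mass_fix_slot over the possible values of slot i. *)
Lemma mass_decomp m P i : (0 < i)%N -> slot_free P i -> (m <= n)%N ->
  mass theta m P = \sum_(0 <= r < (m %/ i).+1)
     slot_weight theta i r * mass theta (m - i * r) (fun c => P c && (c i == 0%N :> nat)).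
Proof.
move=> i_gt0 freeP le_mn.
have massE : mass theta m P = \sum_(c : cycvec n | (c ord0 == ord0) && (cyc_size c == m) && P c)
    (fun _ => 1) (c i) * cyc_weight theta c by apply: eq_bigr => c _; rewrite mul1r.
rewrite massE (@mass_by_slot m P i (fun _ => 1)) //; apply: eq_big_nat => r /andP [_ le_r_mi].
by rewrite mul1r mass_fix_slot // mulnC -leq_divRL // -ltnS.
Qed.

(* Inclusion-exclusion on slot i: inverting mass_decomp with the signed weights
   of slot_weight_inverse (after exchanging the sums over the triangle). *)
Lemma mass_exclude_slot m P i : (0 < i)%N -> slot_free P i -> (m <= n)%N ->
  mass theta m (fun c => P c && (c i == 0%N :> nat)) =
  \sum_(0 <= k < (m %/ i).+1) (-1) ^+ k * slot_weight theta i k * mass theta (m - i * k) P.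
Proof.
move=> i_gt0 freeP le_mn.
set P0 := fun c => P c && (c i == 0%N :> nat).
pose F k r := (-1) ^+ k * slot_weight theta i k * slot_weight theta i r *
              mass theta (m - i * (k + r)) P0.
rewrite (eq_big_nat _ _ (F2 := fun k => \sum_(0 <= r < (m %/ i - k).+1) F k r)); last first.
  move=> k _; rewrite (@mass_decomp (m - i * k) P i i_gt0 freeP (leq_trans (leq_subr _ _) le_mn)).
  rewrite mulr_sumr (mulnC i k) divnBMl; apply: eq_big_nat => r _.
  by rewrite /F mulrA mulnDr subnDA (mulnC i k).
rewrite sum_triangle.
rewrite (eq_big_nat _ _ (F2 := fun s => (s == 0)%:R * mass theta (m - i * s) P0)); last first.
  move=> s /andP [_ lt_s]; rewrite -(slot_weight_inverse theta i s) mulr_suml.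
  by apply: eq_big_nat => a /andP [_ lt_as]; rewrite /F subnKC // -ltnS.
rewrite big_nat_recl // muln0 subn0 /= mul1r big_nat_cond big1 ?addr0 // => s _.
by rewrite mul0r.
Qed.

End SlotDecomposition.

Section TotalMass.
Variables (R : realFieldType) (theta : R) (n : nat).

Local Notation total m := (mass theta m (xpredT : pred (cycvec n))).

(* The weighted sum of i c_i over vectors of size m is theta T_{m-i}: split by
   the value r of slot i, use r w_r = (theta/i) w_{r-1} (slot_weightS), and
   fold the result back with mass_decomp at size m - i. *)
Lemma mass_slot_moment m (i : 'I_n.+1) : (m <= n)%N ->
  \sum_(c : cycvec n | (c ord0 == ord0) && (cyc_size c == m) && xpredT c)
     (i * c i)%:R * cyc_weight theta c =
  if (0 < i <= m)%N then theta * total (m - i) else 0.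
Proof.
move=> le_mn; have [i0|i_gt0] := posnP i.
  by rewrite i0 big1 // => c _; rewrite mul0n mul0r.
pose excl k := mass theta k (fun c : cycvec n => xpredT c && (c i == 0%N :> nat)).
rewrite (eq_bigr (fun c : cycvec n => i%:R * ((fun r => r%:R) (c i) * cyc_weight theta c)));
  last by move=> c _; rewrite natrM mulrA.
rewrite -mulr_sumr (@mass_by_slot _ theta _ m xpredT i (fun r => r%:R) i_gt0 le_mn).
rewrite (eq_big_nat _ _ (F2 := fun r => r%:R * slot_weight theta i r * excl (m - i * r)%N));
  last by move=> r /andP [_ lt_r]; rewrite mass_fix_slot -?mulrA // mulnC -leq_divRL.
have [le_im|lt_mi] := leqP i m; last first.
  by rewrite divn_small // big_nat1 !mul0r mulr0.
have mi_gt0 : (0 < m %/ i)%N by rewrite divn_gt0.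
rewrite -(prednK mi_gt0) big_nat_recl // !mul0r add0r.
rewrite (eq_big_nat _ _ (F2 := fun r => theta / i%:R *
    (slot_weight theta i r * excl ((m - i) - i * r)%N))); last first.
  by move=> r _; rewrite slot_weightS // -mulrA mulnS subnDA.
have -> : ((m %/ i).-1 = (m - i) %/ i)%N by rewrite -{2}(mul1n i) divnBMl subn1.
rewrite -mulr_sumr -(@mass_decomp _ theta n (m - i) xpredT i i_gt0) //;
  last exact: leq_trans (leq_subr _ _) le_mn.
have i_neq0 : i%:R != 0 :> R by rewrite pnatr_eq0 -lt0n.
by rewrite mulrA mulrCA divff // mulr1.
Qed.

(* Weighting each vector by its size m = sum_i i c_i:  m T_m = theta sum_{k<m} T_k. *)
Lemma mass_total_recursion m : (m <= n)%N ->
  m%:R * total m = theta * \sum_(0 <= k < m) total k.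
Proof.
move=> le_mn.
have -> : m%:R * total m =
    \sum_(c : cycvec n | (c ord0 == ord0) && (cyc_size c == m) && xpredT c)
      \sum_(i < n.+1) (i * c i)%:R * cyc_weight theta c.
  rewrite /mass mulr_sumr; apply: eq_bigr => c /andP [/andP [_ /eqP <-] _].
  by rewrite /cyc_size natr_sum mulr_suml.
rewrite exchange_big /= (eq_bigr _ (fun i _ => mass_slot_moment i le_mn)).
rewrite -(big_mkord xpredT (fun i => if (0 < i <= m)%N then theta * total (m - i) else 0)).
rewrite (@sum_nat_truncate _ _ m.+1) //; last by move=> k lt_mk _; rewrite (leqNgt k m) lt_mk andbF.
rewrite big_nat_recl //= add0r mulr_sumr big_nat_rev /=.
apply: eq_big_nat => k /andP [_ lt_km].
have lt_mk_m : (m - k.+1 < m)%N by lia.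
have back : (m - (m - k.+1).+1 = k)%N by lia.
by rewrite add0n lt_mk_m back.
Qed.

(* The only vector of size 0 is the zero vector, of weight 1. *)
Lemma mass_total0 : total 0 = 1.
Proof.
rewrite /mass (big_pred1 [ffun => ord0]); last first.
  move=> c /=; rewrite andbT; apply/andP/eqP => [[/eqP c0 /eqP size0]|->]; last first.
    by rewrite ffunE eqxx /cyc_size big1 // => k _; rewrite ffunE muln0.
  apply/ffunP => k; rewrite ffunE; have [k0|k_gt0] := posnP k.
    by rewrite (_ : k = ord0) //; apply: val_inj.
  have := cyc_size_slot c k; rewrite size0 leqn0 muln_eq0 => /orP [/eqP k0|/eqP ck0].
    by move: k_gt0; rewrite k0.
  exact: val_inj.
by rewrite /cyc_weight big1 // => k _; rewrite ffunE slot_weight0.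
Qed.

(* Hence T_m = theta_(m)/m!, which satisfies the same recursion (rising_recursion). *)
Lemma mass_total m : (m <= n)%N -> total m = rising theta m / (m`!)%:R.
Proof.
elim/ltn_ind: m => m IH le_mn; have [->|m_gt0] := posnP m.
  by rewrite mass_total0 /rising big_ord0 fact0 divr1.
have m_neq0 : m%:R != 0 :> R by rewrite pnatr_eq0 -lt0n.
apply: (mulfI m_neq0); rewrite mass_total_recursion // rising_recursion; congr (_ * _).
apply: eq_big_nat => k /andP [_ lt_km]; apply: IH => //.
exact: leq_trans (ltnW lt_km) le_mn.
Qed.

End TotalMass.

Section NoFixedPoints.
Variables (R : realFieldType) (theta : R) (n : nat) (one : 'I_n.+1).
Hypothesis one1 : one = 1%N :> nat.

Local Notation no_singletons := (fun c : cycvec n => c one == 0%N :> nat).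

(* Excluding slot 1 from the total masses reproduces the defining alternating
   sum of lambda_m:  mass m (c_1 = 0) = lambda_m theta_(m)/m!. *)
Lemma mass_no_singletons m : 0 < theta -> (m <= n)%N ->
  mass theta m no_singletons = lambda theta m * rising theta m / (m`!)%:R.
Proof.
move=> theta_gt0 le_mn; have one_gt0 : (0 < one)%N by rewrite one1.
rewrite (@mass_ext _ theta n m _ (fun c => xpredT c && (c one == 0%N :> nat))) //.
rewrite mass_exclude_slot // one1 divn1.
rewrite (eq_big_nat _ _ (F2 := fun k => (-1) ^+ k * theta ^+ k / (k`!)%:R
                   * rising theta (m - k) / ((m - k)`!)%:R)); last first.
  move=> k _; rewrite mul1n mass_total ?(leq_trans (leq_subr _ _)) //.
  by rewrite /slot_weight divr1 !mulrA.
rewrite big_mkord; case: m le_mn => [|m] _.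
  by rewrite big_ord1 /= /rising !big_ord0 fact0 !divr1 expr0 !mulr1.
have rising_neq0 : rising theta m.+1 != 0 by rewrite lt0r_neq0 // rising_gt0.
by rewrite /lambda; field; rewrite natr_fact_neq0 rising_neq0.
Qed.

(* The numerator: forcing c_i = r on top of c_1 = 0 (mass_fix_slot), then
   excluding slot i by inclusion-exclusion and evaluating with the lemma above. *)
Lemma mass_no_singletons_slot m (i : 'I_n.+1) r :
  0 < theta -> (0 < i)%N -> i != one -> (m <= n)%N -> (i * r <= m)%N ->
  mass theta m (fun c => no_singletons c && (c i == r :> nat)) =
  slot_weight theta i r *
  \sum_(r <= k < (m %/ i).+1) ((-1) ^+ (k - r) * slot_weight theta i (k - r) *
     (lambda theta (m - i * k) * rising theta (m - i * k) / ((m - i * k)`!)%:R)).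
Proof.
move=> theta_gt0 i_gt0 i_neq_one le_mn le_irm.
have free1 : slot_free no_singletons i.
  by move=> c v; rewrite ffunE (negbTE (_ : one != i)) // eq_sym.
rewrite mass_fix_slot // mass_exclude_slot ?(leq_trans (leq_subr _ _)) //.
rewrite mulnC divnBMl; congr (_ * _).
rewrite [RHS]sum_nat_shift subSn; last by rewrite leq_divRL // mulnC.
apply: eq_big_nat => k /andP [_ lt_k]; rewrite addnK.
rewrite mass_no_singletons ?(leq_trans (leq_subr _ _) (leq_trans (leq_subr _ _) le_mn)) //.
by rewrite mulnDr addnC subnDA (mulnC r i).
Qed.

End NoFixedPoints.

Lemma esf_prob_mass (R : realFieldType) (theta : R) n (A : pred (cycvec n)) :
  esf_prob theta A = (n`!)%:R / rising theta n * mass theta n A.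
Proof.
rewrite /esf_prob /mass mulr_sumr big_mkcond [RHS]big_mkcond.
apply: eq_bigr => c _; rewrite /esf_weight -/(cyc_size c).
by case: (A c); case: ((c ord0 == ord0) && (cyc_size c == n)); rewrite ?andbT ?andbF.
Qed.

Theorem mainTheorem10 (R : realFieldType) (theta : R) (n j r : nat) :
  0 < theta -> (2 <= n)%N -> (2 <= j)%N -> (j <= n)%N -> (r <= n %/ j)%N ->
  derangement_prob theta n j r =
    (theta / j%:R) ^+ r / (r`!)%:R * ((n`!)%:R / (lambda theta n * rising theta n)) *
    \sum_(r <= i < (n %/ j).+1)
       ((-1) ^+ (i - r) / ((i - r)`!)%:R *
        (lambda theta (n - j * i) * rising theta (n - j * i) / ((n - j * i)`!)%:R) *
        (theta / j%:R) ^+ (i - r)).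
Proof.
move=> theta_gt0 le2n le2j le_jn le_r_nj.
pose one : 'I_n.+1 := inord 1; pose jj : 'I_n.+1 := inord j.
have one1 : one = 1%N :> nat by rewrite inordK //; lia.
have jjE : jj = j :> nat by rewrite inordK //; lia.
have jj_neq_one : jj != one by rewrite -val_eqE /= jjE one1; lia.
have jj_gt0 : (0 < jj)%N by rewrite jjE; lia.
have le_jr_n : (jj * r <= n)%N by rewrite jjE mulnC -leq_divRL //; lia.
rewrite /derangement_prob !esf_prob_mass.
rewrite (@mass_ext _ theta n n _ (fun c => (c one == 0%N :> nat) && (c jj == r :> nat)));
  last by move=> c; rewrite /Ccount andbC.
rewrite (mass_no_singletons_slot one1) ?(mass_no_singletons one1) // jjE.
have scale_neq0 : (n`!)%:R / rising theta n != 0.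
  by rewrite mulf_neq0 ?invr_eq0 ?natr_fact_neq0 // lt0r_neq0 // rising_gt0.
rewrite invfM mulrACA divff // mul1r invf_div /slot_weight !mulr_sumr mulr_suml.
by apply: eq_big_nat => i _; ring.
Qed.
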